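(* Let $R$ be a principal ideal domain, let $\mathcal A$ be the category of finitely generated $R$-modules, and let $\mathcal C$ be a triangulated subcategory of $\mathcal A$. Let $p$ be a nonzero prime element of $R$ and let $M \in \mathcal C$ be a module whose $p$-torsion part is isomorphic to $(R/p)^r$. Then for any expression $r=\sum_i r_i$ of $r$ as a sum of non-negative integers, there exists a module $N\in\mathcal C$ whose $p$-torsion part is isomorphic to $\bigoplus_i R/(p^{r_i})$ and whose $q$-torsion part is isomorphic to that of $M$ for every prime $q\neq p$.
   Context: A full additive subcategory $\mathcal C$ of $\mathcal A$ is triangulated if whenever two of the three terms of a short exact sequence of $R$-modules in $\mathcal A$ belong to $\mathcal C$, so does the third. For a finitely generated module $M$ and a prime $p$, the $p$-torsion part of $M$ is the submodule of elements annihilated by some power of $p$. *)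

From HB Require Import structures.
From mathcomp Require Import all_boot all_order all_algebra.
Set Implicit Arguments. Unset Strict Implicit. Unset Printing Implicit Defensive.
Import GRing.Theory.
Local Open Scope ring_scope.

Definition rdvd (R : comNzRingType) (a b : R) : Prop := exists c, b = c * a.

Definition is_ideal (R : comNzRingType) (I : R -> Prop) : Prop :=
  [/\ I 0, (forall x y, I x -> I y -> I (x + y)) & (forall a x, I x -> I (a * x))].

Definition is_PID (R : idomainType) : Prop :=
  forall I : R -> Prop, is_ideal I -> exists g : R, forall x, I x <-> rdvd g x.

Definition prime_elt (R : idomainType) (p : R) : Prop :=
  [/\ p != 0, ~ (p \is a GRing.unit)
    & forall a b, rdvd p (a * b) -> rdvd p a \/ rdvd p b].

Definition associated (R : comNzRingType) (p q : R) : Prop := rdvd p q /\ rdvd q p.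

Definition fin_gen (R : comNzRingType) (M : lmodType R) : Prop :=
  exists k : nat, exists e : 'I_k -> M,
    forall x : M, exists c : 'I_k -> R, x = \sum_(i < k) c i *: e i.

Definition short_exact (R : comNzRingType) (A B C : lmodType R)
    (f : {linear A -> B}) (g : {linear B -> C}) : Prop :=
  [/\ injective f, (forall z, exists y, g y = z)
    & forall y, g y = 0 <-> exists x, f x = y].

(* A full additive subcategory C (a class of modules) of the category of
   finitely generated R-modules which is triangulated (2-out-of-3 for SES). *)
Definition triangulated_subcat (R : comNzRingType) (C : lmodType R -> Prop) : Prop :=
  [/\ (forall M, C M -> fin_gen M),
      (exists Z : lmodType R, C Z /\ forall z : Z, z = 0),
      (forall M1 M2 : lmodType R, C M1 -> C M2 -> C (M1 * M2)%type)
    & forall (A B D : lmodType R) (f : {linear A -> B}) (g : {linear B -> D}),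
        fin_gen A -> fin_gen B -> fin_gen D -> short_exact f g ->
        [/\ (C A -> C B -> C D), (C A -> C D -> C B) & (C B -> C D -> C A)]].

Definition torsion_part (R : comNzRingType) (M : lmodType R) (p : R) : M -> Prop :=
  fun x => exists n : nat, p ^+ n *: x = 0.
Arguments torsion_part {R} M p _.

(* The submodule A of M is isomorphic to the direct sum (+)_i R/(s_i),
   written out literally: there is an R-linear bijection from
   (+)_{i < size s} R/(s_i) onto A, i.e. elements e_i of A such that
   [c] |-> \sum_i c_i e_i is well defined, injective and onto A. *)
Definition iso_cyclic_sum (R : comNzRingType) (M : lmodType R) (A : M -> Prop)
    (s : seq R) : Prop :=
  exists e : 'I_(size s) -> M,
    [/\ (forall i, A (e i)),
        (forall x, A x -> exists c : 'I_(size s) -> R, x = \sum_(i < size s) c i *: e i)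
      & forall c : 'I_(size s) -> R,
          \sum_(i < size s) c i *: e i = 0 <-> forall i : 'I_(size s), rdvd (s`_i) (c i)].

Definition iso_sub (R : comNzRingType) (M N : lmodType R) (A : M -> Prop) (B : N -> Prop) : Prop :=
  exists f : M -> N,
    [/\ (forall a x y, A x -> A y -> f (a *: x + y) = a *: f x + f y),
        (forall x, A x -> B (f x)),
        (forall x y, A x -> A y -> f x = f y -> x = y)
      & forall y, B y -> exists2 x, A x & f x = y].

(* Let T = (R/p)^n be the p-torsion of M. Since T meets pM trivially, a
   retraction of M onto T can be built one generator at a time; its coordinates,
   read modulo p, give for every set I of n indices k < m a short exact sequence
     0 -> M -> (M/T)^(a+1) (+) (+)_k R/(p^(v k + [k in I]))
           -> (M/T)^a (+) (+)_k R/(p^(v k)) -> 0,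
   x |-> (x mod T, p^(v k) x_i at the i-th element k of I).  Starting from the zero
   module (a = 0, v = 0), this puts M/T (+) (+)_(k in I) R/p in C.  Two such
   sequences with the same middle term move one unit of exponent from one summand
   to another without leaving C, provided m > n.  Hence
   N = M/T (+) (+)_k R/(p^(r_k)) is in C; its p-torsion is (+)_k R/(p^(r_k)), and
   its q-torsion is that of M because T is killed by p. *)

From HB Require Import structures.
From mathcomp Require Import all_boot all_order all_algebra.
From mathcomp Require Import ring zify.
From Stdlib Require Import ClassicalEpsilon FunctionalExtensionality PropExtensionality Classical.
Set Implicit Arguments. Unset Strict Implicit. Unset Printing Implicit Defensive.
Import GRing.Theory.
Local Open Scope ring_scope.

Section Divisibility.
Variable R : idomainType.
Implicit Types a b c p q x y : R.

Lemma rdvd_refl a : rdvd a a. Proof. by exists 1; rewrite mul1r. Qed.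
Lemma rdvd0 a : rdvd a 0. Proof. by exists 0; rewrite mul0r. Qed.
Lemma rdvd1 x : rdvd 1 x. Proof. by exists x; rewrite mulr1. Qed.
Lemma rdvd_mull a x : rdvd a (x * a). Proof. by exists x. Qed.

Lemma rdvdD a x y : rdvd a x -> rdvd a y -> rdvd a (x + y).
Proof. by move=> [c ->] [d ->]; exists (c + d); rewrite mulrDl. Qed.

Lemma rdvdN a x : rdvd a x -> rdvd a (- x).
Proof. by move=> [c ->]; exists (- c); rewrite mulNr. Qed.

Lemma rdvdMl a x y : rdvd a x -> rdvd a (y * x).
Proof. by move=> [c ->]; exists (y * c); rewrite mulrA. Qed.

Lemma rdvdMr a x y : rdvd a x -> rdvd a (x * y).
Proof. by rewrite mulrC; apply: rdvdMl. Qed.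

Lemma rdvd_trans a b c : rdvd a b -> rdvd b c -> rdvd a c.
Proof. by move=> [x ->] [y ->]; exists (y * x); rewrite mulrA. Qed.

Lemma rdvd_sum (I : Type) a (s : seq I) (P : pred I) (F : I -> R) :
  (forall i, P i -> rdvd a (F i)) -> rdvd a (\sum_(i <- s | P i) F i).
Proof.
move=> dvdF; elim/big_rec: _ => [|i x Pi]; first exact: rdvd0.
exact/rdvdD/dvdF.
Qed.

Lemma rdvd_exp a (i j : nat) : (i <= j)%N -> rdvd (a ^+ i) (a ^+ j).
Proof. by move=> le_ij; exists (a ^+ (j - i)); rewrite -exprD subnK. Qed.

Lemma rdvd_mul2l c a b : c != 0 -> rdvd (c * a) (c * b) -> rdvd a b.
Proof. by move=> c0 [d Ed]; exists d; apply: (mulfI c0); rewrite Ed mulrCA. Qed.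

Lemma rdvd1_unit a : rdvd a 1 -> a \is a GRing.unit.
Proof. by move=> [c Ec]; apply/unitrP; exists c; rewrite Ec mulrC. Qed.

Lemma prime_rdvd_exp p q (n : nat) : prime_elt p -> rdvd p (q ^+ n) -> rdvd p q.
Proof.
case=> _ p_nunit pP; elim: n => [|n IHn]; first by rewrite expr0 => /rdvd1_unit.
by rewrite exprS => /pP [] // /IHn.
Qed.

Lemma prime_not_rdvd_exp p q (n : nat) : prime_elt p -> prime_elt q ->
  ~ associated p q -> ~ rdvd p (q ^+ n).
Proof.
move=> hp [q0 _ qP] npq /(prime_rdvd_exp hp) [c Ec].
have : rdvd q (c * p) by rewrite -Ec; apply: rdvd_refl.
case/qP => [[d Ed]|dvd_qp]; last by apply: npq; split => //; exists c.
case: hp => _ p_nunit _; apply/p_nunit/rdvd1_unit; exists d.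
by apply: (mulfI q0); rewrite mulr1 {1}Ec Ed; ring.
Qed.

Hypothesis hR : is_PID R.

Lemma prime_bezout p c : prime_elt p -> ~ rdvd p c -> exists a b, a * c + b * p = 1.
Proof.
move=> [p0 _ pP] npc.
pose I x := exists a b, x = a * c + b * p.
have I_ideal : is_ideal I.
  split.
  - by exists 0, 0; rewrite !mul0r addr0.
  - move=> _ _ [a [b ->]] [a' [b' ->]]; exists (a + a'), (b + b').
    by rewrite !mulrDl addrACA.
  - by move=> z _ [a [b ->]]; exists (z * a), (z * b); rewrite mulrDr !mulrA.
have [g Ig] := hR I_ideal.
have [h Eh] : rdvd g p by apply/Ig; exists 0, 1; rewrite mul0r add0r mul1r.
have [k Ek] : rdvd g c by apply/Ig; exists 1, 0; rewrite mul0r addr0 mul1r.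
have : rdvd p (h * g) by rewrite -Eh; apply: rdvd_refl.
case/pP => [[h' Eh']|[g' Eg']]; last first.
  by case: npc; exists (k * g'); rewrite Ek Eg' mulrA.
suff /Ig [a [b ->]] : rdvd g 1 by exists a, b.
exists h'; apply: (mulfI p0).
by rewrite mulr1 {1}Eh Eh'; ring.
Qed.

Lemma prime_exp_bezout p q (k n : nat) : prime_elt p -> prime_elt q ->
  ~ associated p q -> exists a b, a * p ^+ k + b * q ^+ n = 1.
Proof.
move=> hp hq npq.
have [a [b Eab]] := prime_bezout hp (prime_not_rdvd_exp (n := n) hp hq npq).
elim: k => [|k [a' [b' IHk]]].
  by exists 1, 0; rewrite expr0 mul1r mul0r addr0.
(* Multiply the identity for [p ^+ k] by [a * q ^+ n + b * p = 1]. *)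
exists (a' * b), (b' * (a * q ^+ n + b * p) + a' * p ^+ k * a).
transitivity ((a' * p ^+ k + b' * q ^+ n) * (a * q ^+ n + b * p)).
  by rewrite exprS; ring.
by rewrite Eab IHk mulr1.
Qed.

Lemma Gauss_rdvd_exp p q (j k : nat) x : prime_elt p -> prime_elt q -> ~ associated p q ->
  rdvd (p ^+ j) (q ^+ k * x) -> rdvd (p ^+ j) x.
Proof.
move=> hp hq npq dvd_qx; have [a [b Eab]] := prime_exp_bezout j k hp hq npq.
rewrite -[x]mul1r -Eab mulrDl -[b * _ * x]mulrA.
by apply: rdvdD; [apply/rdvdMr/rdvd_mull | apply: rdvdMl].
Qed.

End Divisibility.

Record submod (R : pzRingType) (W : lmodType R) := Submod {
  submod_pred :> W -> Prop;
  submod0 : submod_pred 0;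
  submodD : forall x y, submod_pred x -> submod_pred y -> submod_pred (x + y);
  submodZ : forall a x, submod_pred x -> submod_pred (a *: x) }.

Definition mk_linear (R : pzRingType) (U V : lmodType R) (f : U -> V)
  (f_lin : forall a x y, f (a *: x + y) = a *: f x + f y) : {linear U -> V} :=
  HB.pack f (GRing.isLinear.Build R U V *:%R f f_lin).

Lemma regular_scaleE (R : pzSemiRingType) (a x : R) : a *: (x : R^o) = a * x.
Proof. by []. Qed.

Section Quotient.
Variables (R : pzRingType) (W : lmodType R) (S : submod W).

Lemma submodN x : S x -> S (- x).
Proof. by rewrite -scaleN1r; apply: submodZ. Qed.

Lemma submodB x y : S x -> S y -> S (x - y).
Proof. by move=> Sx Sy; apply/submodD/submodN. Qed.

Lemma submod_sum (I : Type) (r : seq I) (P : pred I) (F : I -> W) :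
  (forall i, P i -> S (F i)) -> S (\sum_(i <- r | P i) F i).
Proof.
move=> SF; elim/big_rec: _ => [|i x Pi Sx]; first exact: submod0.
exact/submodD/Sx/SF.
Qed.

Definition coset (x : W) : W -> Prop := fun y => S (y - x).

(* [S] is only a [Prop] predicate, so each coset gets a representative by
   choice and the quotient is the subtype of representatives. *)
Definition coset_repr (x : W) : W := epsilon (inhabits 0) (coset x).

Lemma coset_reprP x : S (coset_repr x - x).
Proof.
apply: (epsilon_spec (inhabits 0) (coset x)).
by exists x; rewrite /coset subrr; apply: submod0.
Qed.

Lemma coset_repr_eq x y : S (x - y) -> coset_repr x = coset_repr y.
Proof.
move=> Sxy; rewrite /coset_repr; congr epsilon.
apply: functional_extensionality => z; apply: propositional_extensionality.
rewrite /coset; have -> : z - x = (z - y) - (x - y) by rewrite opprB addrA subrK.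
split=> [Szxy|Szy]; last exact: submodB.
by have := submodD Szxy Sxy; rewrite subrK.
Qed.

Lemma coset_reprK x : coset_repr (coset_repr x) = coset_repr x.
Proof. exact/coset_repr_eq/coset_reprP. Qed.

Definition quot := {x : W | coset_repr x == x}.
HB.instance Definition _ := [isSub for (@sval W (fun x => coset_repr x == x))].
HB.instance Definition _ := [Choice of quot by <:].

Definition qproj (x : W) : quot := exist _ (coset_repr x) (introT eqP (coset_reprK x)).

Lemma qproj_eq x y : qproj x = qproj y <-> S (x - y).
Proof.
split=> [/(congr1 val) /= E|]; last by move=> Sxy; apply/val_inj/coset_repr_eq.
have -> : x - y = (coset_repr y - y) - (coset_repr x - x).
  by rewrite E opprB [RHS]addrC addrA subrK.
by apply/submodB; apply: coset_reprP.
Qed.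

Lemma qproj_val q : qproj (val q) = q.
Proof. by apply: val_inj => /=; apply/eqP; case: q. Qed.

Lemma quot_ind (P : quot -> Prop) : (forall x, P (qproj x)) -> forall q, P q.
Proof. by move=> Pproj q; rewrite -(qproj_val q). Qed.

Lemma qproj_valB x : S (val (qproj x) - x).
Proof. exact: coset_reprP. Qed.

Definition qadd (a b : quot) := qproj (val a + val b).
Definition qopp (a : quot) := qproj (- val a).
Definition qscale (c : R) (a : quot) := qproj (c *: val a).

Lemma qaddE x y : qadd (qproj x) (qproj y) = qproj (x + y).
Proof.
apply/qproj_eq; rewrite opprD addrACA.
by apply: submodD; apply: qproj_valB.
Qed.

Lemma qoppE x : qopp (qproj x) = qproj (- x).
Proof. by apply/qproj_eq; rewrite -opprD; apply/submodN/qproj_valB. Qed.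

Lemma qscaleE c x : qscale c (qproj x) = qproj (c *: x).
Proof. by apply/qproj_eq; rewrite -scalerBr; apply/submodZ/qproj_valB. Qed.

Lemma qaddA : associative qadd.
Proof. by elim/quot_ind=> x; elim/quot_ind=> y; elim/quot_ind=> z; rewrite !qaddE addrA. Qed.
Lemma qaddC : commutative qadd.
Proof. by elim/quot_ind=> x; elim/quot_ind=> y; rewrite !qaddE addrC. Qed.
Lemma qadd0 : left_id (qproj 0) qadd.
Proof. by elim/quot_ind=> x; rewrite qaddE add0r. Qed.
Lemma qaddN : left_inverse (qproj 0) qopp qadd.
Proof. by elim/quot_ind=> x; rewrite qoppE qaddE addNr. Qed.

HB.instance Definition _ := GRing.isZmodule.Build quot qaddA qaddC qadd0 qaddN.

Lemma qscaleA a b v : qscale a (qscale b v) = qscale (a * b) v.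
Proof. by elim/quot_ind: v => x; rewrite !qscaleE scalerA. Qed.
Lemma qscale1 : left_id 1 qscale.
Proof. by elim/quot_ind=> x; rewrite qscaleE scale1r. Qed.
Lemma qscaleDr : right_distributive qscale +%R.
Proof.
move=> a; elim/quot_ind=> x; elim/quot_ind=> y.
by rewrite [_ + _]qaddE !qscaleE scalerDr -qaddE.
Qed.
Lemma qscaleDl v : {morph qscale^~ v : a b / a + b}.
Proof. by elim/quot_ind: v => x a b; rewrite !qscaleE scalerDl -qaddE. Qed.

HB.instance Definition _ :=
  GRing.Zmodule_isLmodule.Build R quot qscaleA qscale1 qscaleDr qscaleDl.

Lemma qproj_is_linear : linear qproj.
Proof. by move=> c x y; rewrite -qaddE -qscaleE. Qed.

HB.instance Definition _ := GRing.isLinear.Build R W quot *:%R qproj qproj_is_linear.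

Lemma qproj_eq0 x : qproj x = 0 <-> S x.
Proof. by rewrite -(linear0 qproj) qproj_eq subr0. Qed.

End Quotient.

Section QuotientMap.
Variables (R : pzRingType) (W W' : lmodType R) (S : submod W) (S' : submod W').
Variables (f : {linear W -> W'}) (fS : forall w, S w -> S' (f w)).

Definition quot_map_fun (q : quot S) : quot S' := qproj S' (f (val q)).

Lemma quot_map_qproj x : quot_map_fun (qproj S x) = qproj S' (f x).
Proof. by apply/qproj_eq; rewrite -linearB; apply/fS/qproj_valB. Qed.

Lemma quot_map_is_linear a : {morph quot_map_fun : u v / a *: u + v}.
Proof.
move=> u v; elim/quot_ind: u => x; elim/quot_ind: v => y.
have -> : a *: qproj S x + qproj S y = qproj S (a *: x + y) by rewrite linearP.
by rewrite !quot_map_qproj !linearP.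
Qed.

Definition quot_map : {linear quot S -> quot S'} := mk_linear quot_map_is_linear.

Lemma quot_mapE x : quot_map (qproj S x) = qproj S' (f x).
Proof. exact: quot_map_qproj. Qed.

End QuotientMap.

Section SubmodLine.
Variables (R : pzRingType) (W : lmodType R) (P : submod W) (g : W).

Definition add_line_pred (x : W) := exists y c, P y /\ x = y + c *: g.

Lemma add_line0 : add_line_pred 0.
Proof. by exists 0, 0; rewrite scale0r addr0; split => //; apply: submod0. Qed.

Lemma add_lineD x y : add_line_pred x -> add_line_pred y -> add_line_pred (x + y).
Proof.
move=> [x' [c [Px' ->]]] [y' [d [Py' ->]]]; exists (x' + y'), (c + d).
by rewrite scalerDl addrACA; split => //; apply: submodD.
Qed.

Lemma add_lineZ a x : add_line_pred x -> add_line_pred (a *: x).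
Proof.
move=> [y [c [Py ->]]]; exists (a *: y), (a * c).
by rewrite scalerDr scalerA; split => //; apply: submodZ.
Qed.

Definition add_line : submod W := Submod add_line0 add_lineD add_lineZ.

Lemma add_line_sub x : P x -> add_line x.
Proof. by move=> Px; exists x, 0; rewrite scale0r addr0. Qed.

Lemma add_line_gen : add_line g.
Proof. by exists 0, 1; rewrite scale1r add0r; split => //; apply: submod0. Qed.

End SubmodLine.

Section FinGen.
Variable R : comNzRingType.

Lemma fin_gen_image (A B : lmodType R) (f : {linear A -> B}) :
  (forall z, exists y, f y = z) -> fin_gen A -> fin_gen B.
Proof.
move=> f_onto [k [e span_e]]; exists k, (f \o e) => z.
have [y <-] := f_onto z; have [c ->] := span_e y.
by exists c; rewrite linear_sum; apply: eq_bigr => i _; rewrite linearZ.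
Qed.

Lemma fin_gen_trivial (A : lmodType R) : (forall x : A, x = 0) -> fin_gen A.
Proof. by move=> A0; exists 0%N, (fun _ => 0) => x; exists (fun _ => 0); rewrite big_ord0. Qed.

Lemma fin_gen_regular : fin_gen R^o.
Proof. by exists 1%N, (fun _ => 1) => x; exists (fun _ => x); rewrite big_ord1 [RHS]mulr1. Qed.

Lemma fin_gen_prod (A B : lmodType R) : fin_gen A -> fin_gen B -> fin_gen (A * B)%type.
Proof.
move=> [k1 [e1 span1]] [k2 [e2 span2]].
exists (k1 + k2)%N, (fun i => match split i with inl j => (e1 j, 0) | inr j => (0, e2 j) end).
move=> [x y]; have [c1 ->] := span1 x; have [c2 ->] := span2 y.
exists (fun i => match split i with inl j => c1 j | inr j => c2 j end).
rewrite big_split_ord /=.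
apply/pair_equal_spec; rewrite !raddf_sum /=; split.
  rewrite [X in _ = _ + X]big1 ?addr0 => [|i _]; last by rewrite (unsplitK (inr _)) scaler0.
  by apply: eq_bigr => i _; rewrite (unsplitK (inl _)).
rewrite [X in _ = X + _]big1 ?add0r => [|i _]; last by rewrite (unsplitK (inl _)) scaler0.
by apply: eq_bigr => i _; rewrite (unsplitK (inr _)).
Qed.

Lemma fin_gen_ffun (A : lmodType R) (a : nat) : fin_gen A -> fin_gen {ffun 'I_a -> A}.
Proof.
move=> fgA; elim: a => [|a IHa].
  by apply: fin_gen_trivial => f; apply/ffunP => -[].
pose cons_ffun (w : A * {ffun 'I_a -> A}) : {ffun 'I_a.+1 -> A} :=
  [ffun l => if unlift ord0 l is Some l' then w.2 l' else w.1].
have cons_lin c : {morph cons_ffun : w w' / c *: w + w'}.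
  move=> [x f] [y g]; apply/ffunP => l; rewrite !ffunE /=.
  by case: (unlift ord0 l) => [l'|] //; rewrite !ffunE.
apply: (@fin_gen_image _ _ (mk_linear cons_lin)); last exact: fin_gen_prod.
move=> g; exists (g ord0, [ffun l => g (lift ord0 l)]).
by apply/ffunP => l; rewrite ffunE /=; case: unliftP => [l' ->|->]; rewrite ?ffunE.
Qed.

Lemma fin_gen_quot (W : lmodType R) (S : submod W) : fin_gen W -> fin_gen (quot S).
Proof. by apply: fin_gen_image (qproj S) _; elim/quot_ind => x; exists x. Qed.

End FinGen.

Section Triangulated.
Variables (R : comNzRingType) (C : lmodType R -> Prop) (hC : triangulated_subcat C).

Lemma triangulated_fin_gen M : C M -> fin_gen M.
Proof. by case: hC => fgC _ _ _; apply: fgC. Qed.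

Lemma triangulated_ext (A B D : lmodType R) (f : {linear A -> B}) (g : {linear B -> D}) :
  fin_gen A -> fin_gen B -> fin_gen D -> short_exact f g -> C A -> C D -> C B.
Proof. by case: hC => _ _ _ C3 fgA fgB fgD fg_exact; case: (C3 A B D f g). Qed.

Lemma triangulated_coker (A B D : lmodType R) (f : {linear A -> B}) (g : {linear B -> D}) :
  fin_gen A -> fin_gen B -> fin_gen D -> short_exact f g -> C A -> C B -> C D.
Proof. by case: hC => _ _ _ C3 fgA fgB fgD fg_exact; case: (C3 A B D f g). Qed.

Lemma triangulated_trivial (A : lmodType R) : (forall x : A, x = 0) -> C A.
Proof.
move=> A0; case: (hC) => _ [Z [CZ Z0]] _ _.
have fgZ := fin_gen_trivial Z0; have fgA := fin_gen_trivial A0.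
have id_lin a : {morph (@id Z) : x y / a *: x + y} by [].
have zero_lin a : {morph (fun _ : Z => 0 : A) : x y / a *: x + y}.
  by move=> x y; rewrite scaler0 addr0.
apply: (triangulated_coker (f := mk_linear id_lin) (g := mk_linear zero_lin)) => //.
split=> [x y _|z|y]; first by rewrite (Z0 x) (Z0 y).
  by exists 0; rewrite (A0 z).
by split=> _; [exists y|].
Qed.

End Triangulated.

Section InjectiveSums.
Variables (V : nmodType) (a m : nat) (f : 'I_a -> 'I_m).

Lemma sum_inj_eq (F : 'I_a -> V) i : injective f -> \sum_(j | f j == f i) F j = F i.
Proof. by move=> f_inj; apply: big_pred1 => j; apply: (inj_eq f_inj). Qed.

Lemma sum_codom_out (F : 'I_a -> V) k : k \notin codom f -> \sum_(j | f j == k) F j = 0.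
Proof. by move=> kf; rewrite big_pred0 // => j; apply: contraNF kf => /eqP <-; apply: codom_f. Qed.

End InjectiveSums.

Section UnitMoves.
Variable m : nat.
Implicit Types (u : 'I_m -> nat) (i j : 'I_m).

Definition move_unit u i j (k : 'I_m) : nat :=
  if k == i then (u k).+1 else if k == j then (u k).-1 else u k.

Definition excess u : nat := (\sum_k (u k).-1)%N.

Lemma sum_bigD2 (F : 'I_m -> nat) i j : i != j ->
  (\sum_k F k = F i + F j + \sum_(k | (k != i) && (k != j)) F k)%N.
Proof.
move=> ij; rewrite (bigD1 i) //= (bigD1 j) 1?eq_sym //= addnA.
by congr (_ + _); apply: eq_bigl => k; rewrite andbC.
Qed.

Lemma sum_move_unit (f : nat -> nat) u i j : i != j ->
  (\sum_k f (move_unit u i j k) + f (u i) + f (u j) =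
   \sum_k f (u k) + f (u i).+1 + f (u j).-1)%N.
Proof.
move=> ij; rewrite !(sum_bigD2 _ ij) /move_unit !eqxx [j == i]eq_sym (negbTE ij).
have -> : (\sum_(k | (k != i) && (k != j))
      f (if k == i then (u k).+1 else if k == j then (u k).-1 else u k) =
    \sum_(k | (k != i) && (k != j)) f (u k))%N.
  by apply: eq_bigr => k /andP [/negbTE -> /negbTE ->].
lia.
Qed.

Lemma move_unit_sum u i j : i != j -> (0 < u j)%N ->
  (\sum_k move_unit u i j k = \sum_k u k)%N.
Proof. by move=> ij uj; have := sum_move_unit id u ij; rewrite /=; lia. Qed.

Lemma move_unit_excess u i j : i != j -> u i = 0 -> (1 < u j)%N ->
  (excess (move_unit u i j) < excess u)%N.
Proof. by move=> ij ui uj; have := sum_move_unit predn u ij; rewrite /excess ui /=; lia. Qed.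

Lemma move_unitK u i j : i != j -> (0 < u j)%N -> move_unit (move_unit u i j) j i =1 u.
Proof.
move=> ij uj k; rewrite /move_unit.
case: (eqVneq k j) => [->|_]; first by rewrite eq_sym (negbTE ij) prednK.
by case: (eqVneq k i).
Qed.

Lemma exists_zero u : (\sum_k u k < m)%N -> exists k, u k = 0%N.
Proof.
move=> sum_lt; suff /existsP [k /eqP] : [exists k, u k == 0%N] by exists k.
move: sum_lt; apply: contraLR => /existsPn u_pos.
rewrite -leqNgt -[X in (X <= _)%N]card_ord -sum1_card.
by apply: leq_sum => k _; rewrite lt0n u_pos.
Qed.

Definition add_ind (v : 'I_m -> nat) (I : {set 'I_m}) (k : 'I_m) : nat := (v k + (k \in I))%N.

End UnitMoves.

Lemma sum_nth_ord (s : seq nat) (m : nat) : (size s <= m)%N ->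
  (\sum_(k < m) nth 0%N s k)%N = sumn s.
Proof.
elim: s m => [|x s IHs] m size_le; first by rewrite big1 // => k _; rewrite nth_nil.
by case: m size_le => [|m] //= size_le; rewrite big_ord_recl /= IHs.
Qed.

Section TorsionPart.
Variables (R : comNzRingType) (M : lmodType R) (p : R).
Local Notation T := (torsion_part M p).

Lemma torsion_part0 : T 0.
Proof. by exists 0%N; rewrite scaler0. Qed.

Lemma torsion_partD x y : T x -> T y -> T (x + y).
Proof.
move=> [j pjx] [k pky]; exists (j + k)%N.
by rewrite scalerDr {1}exprD mulrC exprD -!scalerA pjx pky !scaler0 addr0.
Qed.

Lemma torsion_partZ a x : T x -> T (a *: x).
Proof. by move=> [k pkx]; exists k; rewrite scalerA mulrC -scalerA pkx scaler0. Qed.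

Definition torsion_submod : submod M := Submod torsion_part0 torsion_partD torsion_partZ.

Lemma torsion_part_expZ k x : T (p ^+ k *: x) -> T x.
Proof. by move=> [j pjx]; exists (j + k)%N; rewrite exprD -scalerA. Qed.

End TorsionPart.

Lemma coprime_torsion_eq0 (R : idomainType) (hR : is_PID R) (p q : R) (M : lmodType R)
    (j k : nat) (x : M) :
  prime_elt p -> prime_elt q -> ~ associated p q ->
  p ^+ j *: x = 0 -> q ^+ k *: x = 0 -> x = 0.
Proof.
move=> hp hq npq pjx qkx; have [a [b Eab]] := prime_exp_bezout hR j k hp hq npq.
by rewrite -[x]scale1r -Eab scalerDl -!scalerA pjx qkx !scaler0 addr0.
Qed.

Section Vmod.
Variables (R : idomainType) (p : R) (M : lmodType R) (m : nat).
Local Notation T := (torsion_part M p).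

Definition Vpre a := ({ffun 'I_a -> M} * {ffun 'I_m -> R^o})%type.

Definition Vrel_pred a (u : 'I_m -> nat) (w : Vpre a) :=
  (forall l, T (w.1 l)) /\ (forall k, rdvd (p ^+ u k) (w.2 k)).

Lemma Vrel0 a u : Vrel_pred u (0 : Vpre a).
Proof. by split=> [l|k]; rewrite ffunE; [apply: torsion_part0 | apply: rdvd0]. Qed.

Lemma VrelD a u (w w' : Vpre a) : Vrel_pred u w -> Vrel_pred u w' -> Vrel_pred u (w + w').
Proof.
move=> [Tw dvdw] [Tw' dvdw']; split=> [l|k]; rewrite ffunE.
  exact: torsion_partD (Tw l) (Tw' l).
exact: rdvdD (dvdw k) (dvdw' k).
Qed.

Lemma VrelZ a u c (w : Vpre a) : Vrel_pred u w -> Vrel_pred u (c *: w).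
Proof.
move=> [Tw dvdw]; split=> [l|k]; rewrite ffunE; first exact: torsion_partZ (Tw l).
exact: rdvdMl (dvdw k).
Qed.

Definition Vrel a u : submod (Vpre a) := Submod (@Vrel0 a u) (@VrelD a u) (@VrelZ a u).

(* [Vmod a u] is (M/T)^a (+) (+)_(k < m) R/(p^(u k)). *)
Definition Vmod a u : lmodType R := quot (Vrel a u).

Lemma fin_gen_Vmod a u : fin_gen M -> fin_gen (Vmod a u).
Proof.
move=> fgM; apply/fin_gen_quot/fin_gen_prod; apply: fin_gen_ffun => //.
exact: fin_gen_regular.
Qed.

Section QTorsion.
Variables (hR : is_PID R) (hp : prime_elt p) (u : 'I_m -> nat) (q : R).
Hypotheses (hq : prime_elt q) (npq : ~ associated p q).
Local Notation Tq := (torsion_part M q).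

Definition Vincl_fun (x : M) : Vmod 1 u := qproj (Vrel 1 u) ([ffun=> x], 0).

Lemma Vincl_is_linear b : {morph Vincl_fun : x y / b *: x + y}.
Proof.
move=> x y; rewrite /Vincl_fun.
have -> : b *: qproj (Vrel 1 u) ([ffun=> x], 0) + qproj _ ([ffun=> y], 0) =
    qproj _ (b *: ([ffun=> x], 0) + ([ffun=> y], 0)) by rewrite linearP.
congr qproj; congr (_, _); last by rewrite /= scaler0 addr0.
by apply/ffunP => l; rewrite !ffunE.
Qed.

Definition Vincl : {linear M -> Vmod 1 u} := mk_linear Vincl_is_linear.

Lemma Vincl_eq0 x : Vincl x = 0 -> T x.
Proof. by move=> /qproj_eq0 [T1 _]; have := T1 ord0; rewrite ffunE. Qed.

Lemma Vincl_torsion x : Tq x -> torsion_part (Vmod 1 u) q (Vincl x).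
Proof. by move=> [k qkx]; exists k; rewrite -linearZ qkx linear0. Qed.

Lemma Vincl_inj x y : Tq x -> Tq y -> Vincl x = Vincl y -> x = y.
Proof.
move=> Tqx Tqy /eqP; rewrite -subr_eq0 -linearB => /eqP /Vincl_eq0 [j pjxy].
have [k qkxy] := @submodB _ _ (torsion_submod M q) _ _ Tqx Tqy.
by apply/eqP; rewrite -subr_eq0; apply/eqP; apply: (coprime_torsion_eq0 hR hp hq npq pjxy qkxy).
Qed.

Lemma Vincl_onto z : torsion_part (Vmod 1 u) q z -> exists2 x, Tq x & Vincl x = z.
Proof.
elim/quot_ind: z => w [k]; rewrite -linearZ => /qproj_eq0 [T1 dvd2].
have Tqw : T (q ^+ k *: w.1 ord0) by have := T1 ord0; rewrite ffunE.
have [j pjqw] := Tqw; have [a [b Eab]] := prime_exp_bezout hR j k hp hq npq.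
exists ((a * p ^+ j) *: w.1 ord0).
  exists k; rewrite scalerA (_ : q ^+ k * (a * p ^+ j) = a * (p ^+ j * q ^+ k)); last by ring.
  by rewrite -!scalerA pjqw scaler0.
apply/qproj_eq; split=> [l|k']; rewrite !ffunE.
  rewrite (ord1 l) -[X in _ - X]scale1r -scalerBl -Eab opprD addrA subrr add0r.
  by rewrite -mulNr -scalerA; apply: torsion_partZ.
rewrite sub0r; apply/rdvdN/(Gauss_rdvd_exp hR (k := k) hp hq npq).
by have := dvd2 k'; rewrite ffunE.
Qed.

Lemma Vmod1_q_torsion : iso_sub Tq (torsion_part (Vmod 1 u) q).
Proof.
exists Vincl; split=> [b x y _ _|x|x y|z]; first exact: linearP.
- exact: Vincl_torsion.
- exact: Vincl_inj.
- exact: Vincl_onto.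
Qed.

End QTorsion.

Section PTorsion.
Variables (rs : seq nat) (u : 'I_m -> nat).
Local Notation s := [seq p ^+ ri | ri <- rs].
Hypotheses (s_le_m : (size s <= m)%N) (u_nth : forall k : 'I_m, u k = nth 0%N rs k).
Local Notation widen := (widen_ord s_le_m).

Lemma widen_inj : injective widen.
Proof. by move=> i j /(congr1 (@nat_of_ord m)) ij; apply: ord_inj. Qed.

Lemma nth_s (i : 'I_(size s)) : s`_i = p ^+ nth 0%N rs i.
Proof. by rewrite (nth_map 0%N) // -(size_map (fun ri => p ^+ ri)). Qed.

Lemma codom_widen_or_u0 k : k \in codom widen \/ u k = 0%N.
Proof.
case: (ltnP k (size s)) => [k_lt|k_ge]; [left | right].
  by apply/codomP; exists (Ordinal k_lt); apply: val_inj.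
by rewrite u_nth nth_default // -(size_map (fun ri => p ^+ ri)).
Qed.

Definition Vunit (i : 'I_(size s)) : Vmod 1 u :=
  qproj (Vrel 1 u) (0, [ffun k => if widen i == k then 1 else 0]).

Definition unit_comb (c : 'I_(size s) -> R) : Vpre 1 :=
  (0, [ffun k => \sum_(i | widen i == k) (c i : R^o)]).

Lemma sum_Vunit c : \sum_i c i *: Vunit i = qproj (Vrel 1 u) (unit_comb c).
Proof.
rewrite /Vunit; under eq_bigr do rewrite -linearZ; rewrite -linear_sum.
congr qproj; apply: injective_projections; rewrite /= raddf_sum.
  by rewrite big1 // => i _; rewrite /= scaler0.
apply/ffunP => k; rewrite sum_ffunE ffunE [RHS]big_mkcond; apply: eq_bigr => i _ /=.
by rewrite !ffunE regular_scaleE; case: eqP; rewrite ?mulr1 ?mulr0.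
Qed.

Lemma Vunit_torsion i : torsion_part (Vmod 1 u) p (Vunit i).
Proof.
exists (nth 0%N rs i); rewrite -linearZ; apply/qproj_eq0.
split=> [l|k]; rewrite !ffunE ?scaler0; first exact: torsion_part0.
rewrite regular_scaleE; case: eqP => [<-|_]; last by rewrite mulr0; apply: rdvd0.
by rewrite mulr1 u_nth; apply: rdvd_refl.
Qed.

Lemma unit_comb_rel c : Vrel 1 u (unit_comb c) <-> forall i : 'I_(size s), rdvd s`_i (c i).
Proof.
split=> [[_ dvd2] i | dvd_c].
  by have := dvd2 (widen i); rewrite ffunE sum_inj_eq ?nth_s ?u_nth //; apply: widen_inj.
split=> [l|k]; rewrite ffunE; first exact: torsion_part0.
case: (codom_widen_or_u0 k) => [/codomP [i ->]|u0]; last by rewrite u0 expr0; apply: rdvd1.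
by rewrite sum_inj_eq ?u_nth -?nth_s //; apply: widen_inj.
Qed.

Lemma Vunit_span z : torsion_part (Vmod 1 u) p z -> exists c, z = \sum_i c i *: Vunit i.
Proof.
elim/quot_ind: z => w [N]; rewrite -linearZ => /qproj_eq0 [T1 _].
exists (fun i => w.2 (widen i)); rewrite sum_Vunit; apply/qproj_eq.
split=> [l|k]; rewrite !ffunE.
  by rewrite subr0; apply: (torsion_part_expZ (k := N)); have := T1 l; rewrite ffunE.
case: (codom_widen_or_u0 k) => [/codomP [i ->]|u0]; last by rewrite u0 expr0; apply: rdvd1.
by rewrite sum_inj_eq ?subrr; [apply: rdvd0 | apply: widen_inj].
Qed.

Lemma Vmod1_p_torsion : iso_cyclic_sum (torsion_part (Vmod 1 u) p) s.
Proof.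
exists Vunit; split; [exact: Vunit_torsion | exact: Vunit_span |] => c.
by rewrite sum_Vunit qproj_eq0 unit_comb_rel.
Qed.

End PTorsion.

End Vmod.

Section ElementaryTorsion.
Variables (R : idomainType) (hR : is_PID R) (p : R) (hp : prime_elt p).
Variables (M : lmodType R) (n : nat) (e : 'I_n -> M).
Hypothesis span_e : forall x, torsion_part M p x -> exists c, x = \sum_(i < n) c i *: e i.
Hypothesis rel_e : forall c : 'I_n -> R, \sum_(i < n) c i *: e i = 0 <-> forall i, rdvd p (c i).

Local Notation T := (torsion_part M p).
Local Notation TS := (torsion_submod M p).

Lemma sum_e_eq (c d : 'I_n -> R) :
  \sum_(i < n) c i *: e i = \sum_(i < n) d i *: e i <-> forall i, rdvd p (c i - d i).
Proof.
rewrite -rel_e; under [X in _ <-> X = 0]eq_bigr do rewrite scalerBl.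
by rewrite sumrB; split=> [->|/eqP]; rewrite ?subrr // subr_eq0 => /eqP.
Qed.

Lemma sum_e_scale_p (c : 'I_n -> R) : p *: \sum_(i < n) c i *: e i = 0.
Proof.
rewrite scaler_sumr; under eq_bigr do rewrite scalerA.
by apply/rel_e => i; apply/rdvdMr/rdvd_refl.
Qed.

Lemma torsion_sum_e (c : 'I_n -> R) : T (\sum_(i < n) c i *: e i).
Proof. by exists 1%N; rewrite expr1 sum_e_scale_p. Qed.

Lemma torsion_scale_p x : T x -> p *: x = 0.
Proof. by move=> /span_e [c ->]; apply: sum_e_scale_p. Qed.

Lemma torsion_scale_p_eq0 v : T (p *: v) -> p *: v = 0.
Proof. by move=> /(@torsion_part_expZ _ _ _ 1) /torsion_scale_p. Qed.

Definition torsion_add_p_pred (x : M) := exists t v, T t /\ x = t + p *: v.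

Lemma torsion_add_p0 : torsion_add_p_pred 0.
Proof. by exists 0, 0; rewrite scaler0 addr0; split => //; apply: torsion_part0. Qed.

Lemma torsion_add_pD x y :
  torsion_add_p_pred x -> torsion_add_p_pred y -> torsion_add_p_pred (x + y).
Proof.
move=> [t [v [Tt ->]]] [t' [v' [Tt' ->]]]; exists (t + t'), (v + v').
by rewrite scalerDr addrACA; split => //; apply: torsion_partD.
Qed.

Lemma torsion_add_pZ a x : torsion_add_p_pred x -> torsion_add_p_pred (a *: x).
Proof.
move=> [t [v [Tt ->]]]; exists (a *: t), (a *: v).
by rewrite scalerDr !scalerA mulrC; split => //; apply: torsion_partZ.
Qed.

Definition torsion_add_p : submod M := Submod torsion_add_p0 torsion_add_pD torsion_add_pZ.

Lemma torsion_add_p_uniq t t' v v' :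
  T t -> T t' -> t + p *: v = t' + p *: v' -> t = t'.
Proof.
move=> Tt Tt' E; have Ept : p *: (v' - v) = t - t'.
  by rewrite scalerBr; apply/eqP; rewrite subr_eq addrAC E addrAC subrr add0r.
have /torsion_scale_p_eq0 : T (p *: (v' - v)) by rewrite Ept; exact: (@submodB _ _ TS _ _ Tt Tt').
by rewrite Ept => /eqP; rewrite subr_eq0 => /eqP.
Qed.

Definition retraction_on (P : submod M) (D : M -> M) :=
  [/\ forall x, torsion_add_p x -> P x,
      forall a x y, P x -> P y -> D (a *: x + y) = a *: D x + D y,
      forall t, T t -> D t = t
    & forall v, D (p *: v) = 0].

Lemma retraction_base : exists D, retraction_on torsion_add_p D.
Proof.
pose dec x t := T t /\ exists v, x = t + p *: v.
pose D x := epsilon (inhabits 0) (dec x).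
have DE x t v : T t -> x = t + p *: v -> D x = t.
  move=> Tt Ex; have [TDx [v' Ex']] : dec x (D x).
    by apply: epsilon_spec; exists t; split => //; exists v.
  by apply: (torsion_add_p_uniq (v := v') (v' := v) TDx Tt); rewrite -Ex' -Ex.
exists D; split => //.
- move=> a x y [t [v [Tt Ex]]] [t' [v' [Tt' Ey]]].
  rewrite (DE _ _ _ Tt Ex) (DE _ _ _ Tt' Ey) (DE _ (a *: t + t') (a *: v + v')) //.
    by apply: torsion_partD => //; apply: torsion_partZ.
  by rewrite Ex Ey scalerDr !scalerA mulrC -scalerA scalerDr addrACA.
- by move=> t Tt; apply: (DE _ _ 0) => //; rewrite scaler0 addr0.
- by move=> v; apply: (DE _ _ v); [apply: torsion_part0 | rewrite add0r].
Qed.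

Lemma line_coeff_rdvd (P : submod M) (g : M) (c : R) :
  (forall v, P (p *: v)) -> ~ P g -> P (c *: g) -> rdvd p c.
Proof.
move=> PpM nPg Pcg; apply: NNPP => npc; apply: nPg.
have [a [b Eab]] := prime_bezout hR hp npc.
rewrite -[g]scale1r -Eab scalerDl -!scalerA.
by apply: submodD; apply: submodZ => //; apply: PpM.
Qed.

(* If [g \notin P], then [c *: g \in P] forces [p %| c], so
   [D' (y + c *: g) := D y] is well defined since [D] kills [pM]. *)
Lemma retraction_add_line (P : submod M) (g : M) D :
  retraction_on P D -> exists D', retraction_on (add_line P g) D'.
Proof.
move=> [PTp Dlin Did Dp].
have PpM v : P (p *: v) by apply: PTp; exists 0, v; rewrite add0r; split => //; apply: torsion_part0.
have DD x y : P x -> P y -> D (x + y) = D x + D y.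
  by move=> Px Py; rewrite -[x]scale1r Dlin // !scale1r.
have PTp' x : torsion_add_p x -> add_line P g x by move=> /PTp; apply: add_line_sub.
case: (classic (P g)) => [Pg | nPg].
  exists D; split => // a x y [x' [c [Px' ->]]] [y' [d [Py' ->]]].
  by apply: Dlin; apply/submodD/submodZ.
pose dec x y := P y /\ exists c, x = y + c *: g.
pose D' x := D (epsilon (inhabits 0) (dec x)).
have D'E x y c : P y -> x = y + c *: g -> D' x = D y.
  move=> Py Ex; have [Py' [c' Ex']] : dec x (epsilon (inhabits 0) (dec x)).
    by apply: epsilon_spec; exists y; split => //; exists c.
  rewrite /D'; set y' := epsilon _ _ in Py' Ex' *.
  have E : y + c *: g = y' + c' *: g by rewrite -Ex -Ex'.
  have Ey' : y' = y + (c - c') *: g by rewrite scalerBl addrA E addrK.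
  have /line_coeff_rdvd [] // : P ((c - c') *: g).
    by rewrite -(addKr y ((c - c') *: g)) -Ey'; apply/submodD/Py'/submodN.
  by move=> h Eh; rewrite Ey' Eh mulrC -scalerA DD // Dp addr0.
exists D'; split => //.
- move=> a x y [x' [c [Px' Ex]]] [y' [d [Py' Ey]]].
  rewrite (D'E _ _ _ Px' Ex) (D'E _ _ _ Py' Ey) -Dlin //.
  apply: (D'E _ _ (a * c + d)); first exact/submodD/Py'/submodZ.
  by rewrite Ex Ey scalerDr scalerA scalerDl addrACA.
- move=> t Tt; rewrite (D'E _ t 0) ?scale0r ?addr0 ?Did //.
  by apply: PTp; exists t, 0; rewrite scaler0 addr0.
- by move=> v; rewrite (D'E _ (p *: v) 0) ?scale0r ?addr0.
Qed.

Definition torsion_add_span (gs : seq M) : submod M :=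
  foldr (fun g P => add_line P g) torsion_add_p gs.

Lemma retraction_span gs : exists D, retraction_on (torsion_add_span gs) D.
Proof.
elim: gs => [|g gs [D retD]]; first exact: retraction_base.
exact: retraction_add_line retD.
Qed.

Lemma torsion_add_span_mem gs g : g \in gs -> torsion_add_span gs g.
Proof.
elim: gs => // g' gs IHgs; rewrite inE => /predU1P [->|/IHgs].
  exact: add_line_gen.
exact: add_line_sub.
Qed.

Lemma torsion_retraction : fin_gen M ->
  exists pi : {linear M -> M}, (forall t, T t -> pi t = t) /\ (forall x, T (pi x)).
Proof.
move=> [k [g span_g]]; have [D [_ Dlin Did Dp]] := retraction_span (codom g).
have Dall x : torsion_add_span (codom g) x.
  have [c ->] := span_g x; apply: submod_sum => i _.
  by apply: submodZ; apply: torsion_add_span_mem; apply: codom_f.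
have Dlin' a : {morph D : x y / a *: x + y} by move=> x y; apply: Dlin.
have D0 : D 0 = 0 by rewrite -{1}(scaler0 _ p) Dp.
exists (mk_linear Dlin'); split => // x; exists 1%N.
by rewrite expr1 /= -[p *: D x]addr0 -D0 -Dlin' addr0 Dp.
Qed.

Section Coordinates.
Variable pi : {linear M -> M}.
Hypotheses (pi_id : forall t, T t -> pi t = t) (pi_T : forall x, T (pi x)).

(* Only meaningful modulo [p], as [e] is a basis of [T] over [R/p]. *)
Definition coord (x : M) : 'I_n -> R :=
  epsilon (inhabits (fun=> 0)) (fun c => pi x = \sum_(i < n) c i *: e i).

Lemma coordP x : pi x = \sum_(i < n) coord x i *: e i.
Proof. exact: (epsilon_spec _ _ (span_e (pi_T x))). Qed.

Lemma coord_torsion x : T x -> x = \sum_(i < n) coord x i *: e i.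
Proof. by move=> Tx; rewrite -coordP pi_id. Qed.

Lemma coord_linear a x y i : rdvd p (coord (a *: x + y) i - (a * coord x i + coord y i)).
Proof.
move: i; apply/sum_e_eq; rewrite -coordP linearP !coordP scaler_sumr -big_split.
by apply: eq_bigr => i _; rewrite scalerDl scalerA.
Qed.

Lemma coord_add_sum x (c : 'I_n -> R) i :
  rdvd p (coord (x + \sum_(j < n) c j *: e j) i - (coord x i + c i)).
Proof.
move: i; apply/sum_e_eq; rewrite -coordP linearD (pi_id (torsion_sum_e c)) coordP.
by rewrite -big_split; apply: eq_bigr => i _; rewrite scalerDl.
Qed.

Variable m : nat.
Local Notation Vpre := (Vpre M m).
Local Notation Vrel := (@Vrel _ p M m).
Local Notation Vmod := (@Vmod _ p M m).

Section Embedding.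
Variables (a : nat) (v : 'I_m -> nat) (I : {set 'I_m}) (cardI : #|I| = n).
Local Notation v' := (add_ind v I).

Definition enumI (i : 'I_n) : 'I_m := enum_val (cast_ord (esym cardI) i).

Lemma enumI_inj : injective enumI.
Proof. by move=> i j /enum_val_inj /cast_ord_inj. Qed.

Lemma enumI_mem i : enumI i \in I.
Proof. exact: enum_valP. Qed.

Lemma enumI_onto k : k \in I -> exists i, enumI i = k.
Proof.
move=> kI; exists (cast_ord cardI (enum_rank_in kI k)).
by rewrite /enumI cast_ordK enum_rankK_in.
Qed.

Lemma rdvd_add_ind (F : 'I_m -> R) :
  (forall i, rdvd (p ^+ (v (enumI i)).+1) (F (enumI i))) ->
  (forall k, k \notin I -> rdvd (p ^+ v k) (F k)) ->
  forall k, rdvd (p ^+ v' k) (F k).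
Proof.
move=> dvdI dvdIC k; rewrite /add_ind; case: (boolP (k \in I)) => [/enumI_onto [i <-]|kI].
  by rewrite addn1; apply: dvdI.
by rewrite addn0; apply: dvdIC.
Qed.

Lemma notin_codom_enumI k : k \notin I -> k \notin codom enumI.
Proof. by apply: contra => /codomP [i ->]; apply: enumI_mem. Qed.

Definition embed_coord (x : M) (k : 'I_m) : R :=
  \sum_(i | enumI i == k) p ^+ v k * coord x i.

Lemma embed_coord_enumI x i : embed_coord x (enumI i) = p ^+ v (enumI i) * coord x i.
Proof. exact/sum_inj_eq/enumI_inj. Qed.

Lemma embed_coord_out x k : k \notin I -> embed_coord x k = 0.
Proof. by move=> /notin_codom_enumI; apply: sum_codom_out. Qed.

Definition embed_pre (x : M) : Vpre a.+1 :=
  ([ffun l => if l == ord0 then x else 0], [ffun k => embed_coord x k]).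

Lemma embed_pre_is_linear_mod b x y :
  Vrel a.+1 v' (embed_pre (b *: x + y) - (b *: embed_pre x + embed_pre y)).
Proof.
split=> [l|]; rewrite /= ?ffunE.
  by case: eqP => _; rewrite ?scaler0 ?addr0 subrr; apply: torsion_part0.
apply: rdvd_add_ind => [i|k kI]; rewrite !ffunE; last first.
  by rewrite !embed_coord_out // scaler0 addr0 subrr; apply: rdvd0.
rewrite !embed_coord_enumI regular_scaleE exprSr.
have [h /eqP] := coord_linear b x y i; rewrite subr_eq => /eqP ->.
by exists h; ring.
Qed.

Lemma embed_coord_rdvd x k : rdvd (p ^+ v k) (embed_coord x k).
Proof. by apply: rdvd_sum => i _; apply/rdvdMr/rdvd_refl. Qed.

Lemma Vembed_is_linear b :
  {morph (fun x => qproj (Vrel a.+1 v') (embed_pre x)) : x y / b *: x + y}.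
Proof.
move=> x y /=; have -> : b *: qproj (Vrel a.+1 v') (embed_pre x) + qproj _ (embed_pre y) =
    qproj _ (b *: embed_pre x + embed_pre y) by rewrite linearP.
exact/qproj_eq/embed_pre_is_linear_mod.
Qed.

Definition Vembed : {linear M -> Vmod a.+1 v'} := mk_linear Vembed_is_linear.

Definition drop_head (w : Vpre a.+1) : Vpre a := ([ffun l => w.1 (lift ord0 l)], w.2).

Lemma drop_head_is_linear b : {morph drop_head : w w' / b *: w + w'}.
Proof. by move=> w w'; congr (_, _); apply/ffunP => l; rewrite !ffunE. Qed.

Lemma drop_head_rel w : Vrel a.+1 v' w -> Vrel a v (drop_head w).
Proof.
move=> [T1 dvd2]; split=> [l|k]; rewrite /= ?ffunE //.
by apply: rdvd_trans (dvd2 k); apply/rdvd_exp/leq_addr.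
Qed.

Definition Vdrop : {linear Vmod a.+1 v' -> Vmod a v} :=
  @quot_map _ _ _ _ _ (mk_linear drop_head_is_linear) drop_head_rel.

Lemma Vembed_inj : injective Vembed.
Proof.
move=> x y /eqP; rewrite -subr_eq0 -linearB => /eqP /qproj_eq0 [T1 dvd2].
have Txy : T (x - y) by have := T1 ord0; rewrite ffunE eqxx.
apply/eqP; rewrite -subr_eq0; apply/eqP.
rewrite (coord_torsion Txy); apply/rel_e => i.
have := dvd2 (enumI i); rewrite ffunE embed_coord_enumI /add_ind enumI_mem addn1 exprSr.
by apply: rdvd_mul2l; apply: expf_neq0; case: hp.
Qed.

Lemma Vdrop_onto z : exists y, Vdrop y = z.
Proof.
elim/quot_ind: z => w.
exists (qproj (Vrel a.+1 v') ([ffun l => if unlift ord0 l is Some l' then w.1 l' else 0], w.2)).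
rewrite quot_mapE /=; congr qproj; case: w => w1 w2; congr (_, _).
by apply/ffunP => l; rewrite !ffunE liftK.
Qed.

Lemma Vdrop_Vembed x : Vdrop (Vembed x) = 0.
Proof.
rewrite quot_mapE; apply/qproj_eq0; split=> [l|k]; rewrite /= !ffunE.
  by rewrite eq_sym (negbTE (neq_lift _ _)); apply: torsion_part0.
exact: embed_coord_rdvd.
Qed.

Lemma Vdrop_ker q : Vdrop q = 0 -> exists x, Vembed x = q.
Proof.
elim/quot_ind: q => w; rewrite quot_mapE => /qproj_eq0 [T1 dvd2].
pose d k := epsilon (inhabits 0) (fun d => w.2 k = d * p ^+ v k).
have Ed k : w.2 k = d k * p ^+ v k by apply: (epsilon_spec _ _ (dvd2 k)).
set x0 := w.1 ord0.
(* Correct [x0] by an element of [T] so that its coordinates on [I] become [d]. *)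
exists (x0 + \sum_(i < n) (d (enumI i) - coord x0 i) *: e i).
apply/qproj_eq; split=> [l|]; rewrite /= ?ffunE.
- case: (unliftP ord0 l) => [l' ->|->]; rewrite ?eqxx.
    rewrite eq_sym (negbTE (neq_lift _ _)) sub0r; apply: (@submodN _ _ TS).
    by have := T1 l'; rewrite ffunE.
  by rewrite addrC addKr; apply: torsion_sum_e.
- apply: rdvd_add_ind => [i|k kI]; rewrite !ffunE.
    rewrite embed_coord_enumI Ed exprSr.
    have [h /eqP] := coord_add_sum x0 (fun i => d (enumI i) - coord x0 i) i.
    by rewrite subr_eq => /eqP ->; exists h; ring.
  by rewrite embed_coord_out // sub0r Ed; apply/rdvdN/rdvd_mull.
Qed.

Lemma Vembed_Vdrop_exact : short_exact Vembed Vdrop.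
Proof.
split; [exact: Vembed_inj | exact: Vdrop_onto | move=> q; split].
  exact: Vdrop_ker.
by move=> [x <-]; apply: Vdrop_Vembed.
Qed.

End Embedding.

Section Moves.
Variables (C : lmodType R -> Prop) (hC : triangulated_subcat C) (CM : C M).
Hypothesis n_lt_m : (n < m)%N.

Lemma C_Vmod_succ a v (I : {set 'I_m}) : #|I| = n -> C (Vmod a v) -> C (Vmod a.+1 (add_ind v I)).
Proof.
move=> cardI; have fgM := triangulated_fin_gen hC CM.
by apply: (triangulated_ext hC _ _ _ (Vembed_Vdrop_exact a v cardI)) => //; apply: fin_gen_Vmod.
Qed.

Lemma C_Vmod_pred a v (I : {set 'I_m}) : #|I| = n -> C (Vmod a.+1 (add_ind v I)) -> C (Vmod a v).
Proof.
move=> cardI; have fgM := triangulated_fin_gen hC CM.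
by apply: (triangulated_coker hC _ _ _ (Vembed_Vdrop_exact a v cardI)) => //; apply: fin_gen_Vmod.
Qed.

Lemma C_Vmod_indicator (I : {set 'I_m}) : #|I| = n -> C (Vmod 1 (fun k => nat_of_bool (k \in I))).
Proof.
move=> cardI; apply: (C_Vmod_succ (v := fun=> 0%N) cardI).
apply: triangulated_trivial => //; elim/quot_ind => w; apply/qproj_eq0.
by split=> [[] //|k]; rewrite expr0; exists (w.2 k); rewrite mulr1.
Qed.

Lemma C_Vmod1_transfer w w' (I I' : {set 'I_m}) : #|I| = n -> #|I'| = n ->
  add_ind w I =1 add_ind w' I' -> C (Vmod 1 w) -> C (Vmod 1 w').
Proof.
move=> cardI cardI' /functional_extensionality E /(C_Vmod_succ cardI).
by rewrite E; apply: C_Vmod_pred cardI'.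
Qed.

Lemma C_Vmod1_move w i j : (0 < n)%N -> i != j -> (0 < w j)%N ->
  C (Vmod 1 w) -> C (Vmod 1 (move_unit w i j)).
Proof.
move=> n_gt0 ij wj_gt0.
(* Compare through [I = i |: S] and [I' = j |: S] with [S] avoiding [i] and [j];
   such an [S] of size [n.-1] exists because [n < m]. *)
have /card_geqP [s [s_uniq s_size s_sub]] : (n.-1 <= #|~: [set i; j]|)%N.
  by have := cardsC [set i; j]; rewrite cards2 ij card_ord /=; lia.
have cardS : #|[set k in s]| = n.-1 by rewrite cardsE (card_uniqP s_uniq).
have notin_s k : k \in [set i; j] -> k \notin s.
  by move=> kij; apply: contraL kij => /s_sub; rewrite inE.
have iS := notin_s i (set21 i j); have jS := notin_s j (set22 i j).
apply: (C_Vmod1_transfer (I := i |: [set k in s]) (I' := j |: [set k in s])).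
- by rewrite cardsU1 inE iS cardS; lia.
- by rewrite cardsU1 inE jS cardS; lia.
move=> k; rewrite /add_ind /move_unit !inE.
case: (eqVneq k i) => [->|ki]; first by rewrite (negbTE ij) (negbTE iS) /=; lia.
by case: (eqVneq k j) => [->|//]; rewrite (negbTE jS) /=; lia.
Qed.

(* Descent on the excess: an exponent above 1 gives a unit to a zero exponent,
   which exists since [\sum_k u k = n < m]. *)
Lemma C_Vmod1 u : (\sum_k u k)%N = n -> C (Vmod 1 u).
Proof.
have [d] := ubnP (excess u); elim: d u => // d IHd u ex_u sum_u.
case: (boolP [exists k, 1 < u k]%N) => [/existsP [k1 u_k1]|/existsPn u_le1]; last first.
  have {}u_le1 k : (u k <= 1)%N by rewrite leqNgt u_le1.
  have -> : u = fun k => nat_of_bool (k \in [set k | u k == 1%N]).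
    by apply: functional_extensionality => k; rewrite inE; case: (u k) (u_le1 k) => [|[]].
  apply: C_Vmod_indicator; rewrite -sum_u -sum1_card big_mkcond /=.
  by apply: eq_bigr => k _; rewrite inE; case: (u k) (u_le1 k) => [|[]].
have [k2 u_k2] : exists k2, u k2 = 0%N by apply: exists_zero; rewrite sum_u.
have k21 : k2 != k1 by apply: contraTneq u_k1 => <-; rewrite u_k2.
have n_gt0 : (0 < n)%N by rewrite -sum_u (bigD1 k1) //= addn_gt0 ltnW.
rewrite -(functional_extensionality _ _ (move_unitK k21 (ltnW u_k1))).
apply: C_Vmod1_move => //; [by rewrite eq_sym | by rewrite /move_unit eqxx |].
apply: IHd; last by rewrite move_unit_sum // ltnW.
by rewrite -ltnS; apply: leq_trans _ ex_u; rewrite ltnS; apply: move_unit_excess.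
Qed.

End Moves.

End Coordinates.

End ElementaryTorsion.

Unset Implicit Arguments.

Theorem mainTheorem2 (R : idomainType) (hR : is_PID R)
    (C : lmodType R -> Prop) (hC : triangulated_subcat C)
    (p : R) (hp : prime_elt p)
    (M : lmodType R) (hM : C M) (r : nat)
    (hMp : iso_cyclic_sum (torsion_part M p) (nseq r p))
    (rs : seq nat) (hrs : sumn rs = r) :
  exists N : lmodType R,
    [/\ C N,
        iso_cyclic_sum (torsion_part N p) [seq p ^+ ri | ri <- rs]
      & forall q : R, prime_elt q -> ~ associated p q ->
          iso_sub (torsion_part M q) (torsion_part N q)].
Proof.
case: hMp => e [_ span_e rel_nseq]; set n := size (nseq r p) in e span_e rel_nseq.
have lt_r (i : 'I_n) : (i < r)%N by rewrite -(size_nseq r p); apply: ltn_ord.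
have rel_e c : \sum_(i < n) c i *: e i = 0 <-> forall i, rdvd p (c i).
  by rewrite rel_nseq; split=> dvd_c i; have := dvd_c i; rewrite nth_nseq lt_r.
have [pi [pi_id pi_T]] := torsion_retraction hR hp span_e rel_e (triangulated_fin_gen hC hM).
pose m := (size rs + n).+1.
have s_le_m : (size [seq p ^+ ri | ri <- rs] <= m)%N by rewrite size_map /m; lia.
exists (Vmod p M 1 (fun k : 'I_m => nth 0%N rs k)); split.
- apply: (C_Vmod1 hp span_e rel_e pi_id pi_T hC hM); first by rewrite /m; lia.
  by rewrite sum_nth_ord ?hrs /n ?size_nseq //; move: s_le_m; rewrite size_map; lia.
- exact: Vmod1_p_torsion s_le_m _.
- by move=> q hq npq; apply: Vmod1_q_torsion.
Qed.
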